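(* Let $K$ be a perfect field, $k\subset K$ a subfield, and $\lambda\in\operatorname{Emb}(K)$ with $|\lambda^G|=n<\infty$. Let $\overline{\lambda}$ be an extension of $\lambda$ to $\overline{K}$, let $\overline{\mu}$ be the inverse of $\overline{\lambda}$, and let $\mu=\overline{\mu}|_K$. Then $\overline{\lambda}$ induces an isomorphism of two-sided vector spaces ${}_{\mu}(\mu(K)\vee K)_{\operatorname{id}}\to V(\lambda)$.
   Context: $\overline{K}$ is a fixed algebraic closure of $K$. A two-sided vector space is a $K\otimes_kK$-module. $\operatorname{Emb}(K)$ is the set of $k$-linear field embeddings $K\to\overline{K}$; $G=\operatorname{Aut}(\overline{K}/K)$ acts by left composition, with orbits $\lambda^G$. $K(\lambda)$ is the composite of $K$ and $\lambda(K)$ in $\overline{K}$, and $V(\lambda)$ is the two-sided vector space with underlying set $K(\lambda)$ and action $a\cdot v\cdot b=av\lambda(b)$. $\mu(K)\vee K$ denotes the composite of $\mu(K)$ and $K$ in $\overline{K}$. For $k$-linear embeddings $\gamma,\delta$ of $K$ into a field $L$, ${}_\gamma L_\delta$ is the two-sided vector space with underlying set $L$ and action $(a\otimes b)\cdot c=\gamma(a)\delta(b)c$. *)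

From HB Require Import structures.
From mathcomp Require Import all_boot all_order all_algebra.
Set Implicit Arguments. Unset Strict Implicit. Unset Printing Implicit Defensive.
Import GRing.Theory.
Local Open Scope ring_scope.

Definition is_subfield (F : fieldType) (S : F -> Prop) : Prop :=
  [/\ S 0, S 1, (forall x y, S x -> S y -> S (x - y)),
      (forall x y, S x -> S y -> S (x * y)) & (forall x, S x -> S x^-1)].

Definition ring_hom (R S : fieldType) (f : R -> S) : Prop :=
  [/\ (forall x y, f (x - y) = f x - f y), f 1 = 1 & (forall x y, f (x * y) = f x * f y)].

Definition img (A B : Type) (f : A -> B) : B -> Prop := fun y => exists a, y = f a.

Definition compositum (F : fieldType) (A B : F -> Prop) : F -> Prop :=
  fun x => forall S, is_subfield S -> (forall a, A a -> S a) ->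
                     (forall b, B b -> S b) -> S x.

Definition perfect_field (K : fieldType) : Prop :=
  [pchar K] =i pred0 \/
  (forall p, p \in [pchar K] -> forall x : K, exists y : K, y ^+ p = x).

(* Kbar is an algebraic closure of K (embedded via iota): algebraically
   closed (closedFieldType) and algebraic over iota(K). *)
Definition algebraic_over (K : fieldType) (Kbar : fieldType)
  (iota : {rmorphism K -> Kbar}) : Prop :=
  forall x : Kbar, exists p : {poly K}, p != 0 /\ root (map_poly iota p) x.

(* lam in Emb(K): k-linear field embedding K -> Kbar, i.e. a ring morphism
   agreeing with iota on the subfield k of K. *)
Definition is_emb (K Kbar : fieldType) (iota : {rmorphism K -> Kbar})
  (kS : K -> Prop) (lam : K -> Kbar) : Prop :=
  ring_hom lam /\ forall c, kS c -> lam c = iota c.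

(* sigma in G = Aut(Kbar / K): a bijective ring endomorphism fixing iota(K). *)
Definition in_AutK (K Kbar : fieldType) (iota : {rmorphism K -> Kbar})
  (sigma : Kbar -> Kbar) : Prop :=
  [/\ ring_hom sigma, bijective sigma & forall a, sigma (iota a) = iota a].

(* |lam^G| = n : the orbit {sigma o lam | sigma in G} has exactly n elements
   (functions compared extensionally). *)
Definition orbit_card (K Kbar : fieldType) (iota : {rmorphism K -> Kbar})
  (lam : K -> Kbar) (n : nat) : Prop :=
  exists f : 'I_n -> (K -> Kbar),
    [/\ (forall i j, f i =1 f j -> i = j),
        (forall i, exists sigma, in_AutK iota sigma /\ f i =1 sigma \o lam)
      & (forall sigma, in_AutK iota sigma -> exists i, f i =1 sigma \o lam)].

(* Two-sided vector spaces inside Kbar: carrier S : Kbar -> Prop with the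
   K (x)_k K action determined on pure tensors, act a b v = (a (x) b) . v. *)
(* V(lam): carrier K(lam), action a.v.b = a v lam(b). *)
Definition V_act (K Kbar : fieldType) (iota : {rmorphism K -> Kbar})
  (lam : K -> Kbar) (a b : K) (v : Kbar) : Kbar := iota a * v * lam b.
(* _gamma L _delta : action (a (x) b) . c = gamma(a) delta(b) c. *)
Definition twisted_act (K Kbar : fieldType) (gamma delta : K -> Kbar)
  (a b : K) (c : Kbar) : Kbar := gamma a * delta b * c.

Definition tsv_iso (K Kbar : fieldType)
  (S1 : Kbar -> Prop) (act1 : K -> K -> Kbar -> Kbar)
  (S2 : Kbar -> Prop) (act2 : K -> K -> Kbar -> Kbar) (f : Kbar -> Kbar) : Prop :=
  [/\ (forall x, S1 x -> S2 (f x)),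
      (forall y, S2 y -> exists x, S1 x /\ f x = y),
      (forall x y, S1 x -> S1 y -> f x = f y -> x = y),
      (forall x y, S1 x -> S1 y -> f (x + y) = f x + f y)
    & (forall a b x, S1 x -> f (act1 a b x) = act2 a b (f x))].

From HB Require Import structures.
From mathcomp Require Import all_boot all_order all_algebra.
Local Open Scope ring_scope.
Import GRing.Theory.
Set Implicit Arguments. Unset Strict Implicit. Unset Printing Implicit Defensive.

(* The automorphism lambar of Kbar carries mu(K) onto iota(K) and iota(K)
   onto lam(K) (because lambar o mu = iota and lambar o iota = lam), hence the
   composite mu(K) \/ K onto K(lam); the same identity lambar o mu = iota turns
   the twisted action into the action of V(lam). *)

Section RingHom.

Variables (F F' : fieldType) (f : F -> F').
Hypothesis f_hom : ring_hom f.

Lemma ring_hom0 : f 0 = 0.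
Proof. by case: f_hom => fB _ _; rewrite -(subrr 1) fB subrr. Qed.

Lemma ring_homN x : f (- x) = - f x.
Proof. by case: f_hom => fB _ _; rewrite -sub0r fB ring_hom0 sub0r. Qed.

Lemma ring_homD x y : f (x + y) = f x + f y.
Proof. by case: f_hom => fB _ _; rewrite -{1}[y]opprK fB ring_homN opprK. Qed.

Lemma ring_homV x : f x^-1 = (f x)^-1.
Proof.
case: f_hom => _ f1 fM.
have [->|x_neq0] := eqVneq x 0; first by rewrite invr0 ring_hom0 invr0.
have fxV : f x * f x^-1 = 1 by rewrite -fM divff.
have fx_neq0 : f x != 0.
  by apply: contra_neq (oner_neq0 F') => fx0; rewrite -fxV fx0 mul0r.
by apply: (mulfI fx_neq0); rewrite fxV divff.
Qed.

Lemma ring_hom_can g : cancel f g -> cancel g f -> ring_hom g.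
Proof.
move=> fK gK; case: f_hom => fB f1 fM; have f_inj := can_inj fK.
split=> [x y|| x y]; apply: f_inj; by rewrite ?fB ?f1 ?fM ?gK.
Qed.

Lemma is_subfield_preim (S : F' -> Prop) :
  is_subfield S -> is_subfield (fun x => S (f x)).
Proof.
case: f_hom => fB f1 fM [S0 S1 SB SM SV].
split=> [|| x y | x y | x]; rewrite ?ring_hom0 ?f1 ?fB ?fM ?ring_homV //.
- exact: SB.
- exact: SM.
- exact: SV.
Qed.

Lemma compositum_hom (A B : F -> Prop) (C D : F' -> Prop) x :
  (forall a, A a -> C (f a)) -> (forall b, B b -> D (f b)) ->
  compositum A B x -> compositum C D (f x).
Proof.
move=> AC BD ABx S S_sub CS DS.
apply: (ABx (fun z => S (f z))) => [|a /AC|b /BD].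
- exact: is_subfield_preim.
- exact: CS.
- exact: DS.
Qed.

End RingHom.

Theorem lemma3p10 (K : fieldType) (Kbar : closedFieldType)
  (iota : {rmorphism K -> Kbar}) (kS : K -> Prop)
  (lam : K -> Kbar) (n : nat) (lambar mubar : Kbar -> Kbar) :
  perfect_field K ->
  algebraic_over iota ->
  is_subfield kS ->
  is_emb iota kS lam ->
  orbit_card iota lam n ->
  ring_hom lambar ->
  (forall a, lambar (iota a) = lam a) ->
  cancel lambar mubar -> cancel mubar lambar ->
  let mu := fun a : K => mubar (iota a) in
  tsv_iso (compositum (img mu) (img iota)) (twisted_act mu iota)
          (compositum (img iota) (img lam)) (V_act iota lam)
          lambar.
Proof.
move=> _ _ _ _ _ lambar_hom lambar_iota lambarK mubarK mu.
have mubar_hom : ring_hom mubar := ring_hom_can lambar_hom lambarK mubarK.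
have lambar_mu a : lambar (mu a) = iota a by rewrite /mu mubarK.
split=> [x | y | x y _ _ /(can_inj lambarK) // | x y _ _ | a b x _].
- apply: compositum_hom => // _ [a ->]; exists a.
  + exact: lambar_mu.
  + exact: lambar_iota.
- move=> Ky; exists (mubar y); split; last by rewrite mubarK.
  apply: (compositum_hom mubar_hom _ _ Ky) => _ [a ->]; exists a => //.
  by rewrite -lambar_iota lambarK.
- exact: ring_homD.
- case: lambar_hom => _ _ lambarM.
  by rewrite /twisted_act /V_act !lambarM lambar_mu lambar_iota mulrAC.
Qed.
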